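(* For every integer $L \geq 2$, $\delta_{3D}(L) = 2L^3 - 2$. That is, the minimum number of links needed to rigidify an $L\times L\times L$ prismatic assembly (i.e. to make its infinitesimal degrees of freedom equal to $6$) is exactly $2L^3-2$.
   Context: An $L\times M\times N$ prismatic assembly ($L,M,N$ positive integers) consists of $LMN$ solid cubes of side length $l>0$ occupying the cells of the $L\times M\times N$ cubic grid $[0,Ll]\times[0,Ml]\times[0,Nl]$. Each cube has its own $8$ vertices, so the configuration is described by $24LMN$ coordinates (vertices of different cubes are distinct variables even when they occupy the same grid point). A possible link is an unordered pair of vertices belonging to two distinct cubes that occupy the same grid point in the undeformed configuration; a link pattern is a set of such links. The constraints are: for each cube, the $12$ edge-length constraints $\|v_i-v_j\|^2-l^2=0$ for adjacent vertices $v_i,v_j$ of the cube, and the $6$ face-diagonal constraints $\|v_i-v_j\|^2-2l^2=0$ for opposite vertices $v_i,v_j$ of each face of the cube; and for each link joining vertices $v_i=(x_{3i-2},x_{3i-1},x_{3i})$ and $v_j=(x_{3j-2},x_{3j-1},x_{3j})$, the three constraints $x_{3i-2}-x_{3j-2}=0$, $x_{3i-1}-x_{3j-1}=0$, $x_{3i}-x_{3j}=0$. With $n$ links, the rigidity matrix $A$ is the $(18LMN+3n)\times 24LMN$ Jacobian matrix $A_{ij}=\partial g_i/\partial x_j$ of all these constraints $g_i$, evaluated at the undeformed grid configuration, and the (infinitesimal) degrees of freedom are $d = 24LMN - \operatorname{rank}(A)$. The assembly is rigidified by a link pattern if $d=6$. $\delta_{3D}(L,M,N)$ denotes the minimum number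 of links in a link pattern that rigidifies the $L\times M\times N$ assembly, and $\delta_{3D}(L):=\delta_{3D}(L,L,L)$. *)

From HB Require Import structures.
From mathcomp Require Import all_boot all_order all_algebra.
Set Implicit Arguments. Unset Strict Implicit. Unset Printing Implicit Defensive.
Import Order.TTheory GRing.Theory Num.Theory.
Local Open Scope ring_scope.

(* Cubes of the L x M x N assembly, indexed by the lower corner cell (a,b,c). *)
Definition cube (L M N : nat) := ('I_L * 'I_M * 'I_N)%type.
(* The 8 vertices of a cube, indexed by their offset in {0,1}^3. *)
Definition corner := ('I_2 * 'I_2 * 'I_2)%type.
(* A vertex variable: a vertex of a given cube (vertices of different cubes are
   distinct even if they coincide in space). *)
Definition vert (L M N : nat) := (cube L M N * corner)%type.
Definition coord (L M N : nat) := (vert L M N * 'I_3)%type.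

(* Grid point (in units of l) occupied by a vertex in the undeformed configuration. *)
Definition gridpt L M N (v : vert L M N) : nat * nat * nat :=
  let: ((a, b, c), (i, j, k)) := v in ((a + i)%N, (b + j)%N, (c + k)%N).

Definition gridax (p : nat * nat * nat) (ax : 'I_3) : nat :=
  let: (x, y, z) := p in
  if val ax == 0%N then x else if val ax == 1%N then y else z.

Definition pos (R : pzRingType) (l : R) L M N (v : vert L M N) (ax : 'I_3) : R :=
  l * (gridax (gridpt v) ax)%:R.

(* Row of the Jacobian of  ||u - w||^2 - c  at the undeformed configuration:
   d/dx_{u,ax} = 2 (u_ax - w_ax),  d/dx_{w,ax} = 2 (w_ax - u_ax). *)
Definition dist_row (R : pzRingType) (l : R) L M N (u w : vert L M N)
  : 'rV[R]_#|{: coord L M N}| :=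
  \row_j let: (v, ax) := enum_val j in
         if v == u then 2 * (pos l u ax - pos l w ax)
         else if v == w then 2 * (pos l w ax - pos l u ax)
         else 0.

(* Row of the Jacobian of the link constraint  x_{u,ax} - x_{w,ax} = 0. *)
Definition link_row (R : pzRingType) L M N (u w : vert L M N) (ax : 'I_3)
  : 'rV[R]_#|{: coord L M N}| :=
  \row_j if enum_val j == (u, ax) then 1
         else if enum_val j == (w, ax) then -1 else 0.

(* Number of coordinates in which two corners differ: 1 = cube edge,
   2 = diagonal of a face. *)
Definition hamming (p q : corner) : nat :=
  let: (p1, p2, p3) := p in let: (q1, q2, q3) := q in
  ((p1 != q1) + (p2 != q2) + (p3 != q3))%N.

(* Index 0..7 of a corner, used to order the two ends of a pair. *)
Definition corner_code (p : corner) : nat :=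
  let: (p1, p2, p3) := p in (4 * p1 + 2 * p2 + p3)%N.

Definition corner_even (p : corner) : bool :=
  let: (p1, p2, p3) := p in ~~ odd (p1 + p2 + p3).

(* The 18 constraints of each cube: unordered pairs {p,q} of corners
   (p < q) that are adjacent (12 edges), or opposite on a face, one diagonal
   per face (6 face diagonals): we take on each face the diagonal joining its
   two even-parity corners (these 6 diagonals form a regular tetrahedron). *)
Definition cube_rows (R : pzRingType) (l : R) L M N : seq 'rV[R]_#|{: coord L M N}| :=
  [seq dist_row l (c, pq.1) (c, pq.2)
  | c <- enum {: cube L M N},
    pq <- [seq pq <- enum {: corner * corner} |
             (corner_code pq.1 < corner_code pq.2)%N &&
             ((hamming pq.1 pq.2 == 1%N) ||
              ((hamming pq.1 pq.2 == 2%N) && corner_even pq.1))]].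

(* A link pattern is a set of unordered pairs of vertices. *)
Definition link_pattern L M N := {set {set vert L M N}}.

Definition valid_pattern L M N (P : link_pattern L M N) : Prop :=
  forall e, e \in P -> exists u w : vert L M N,
    e = [set u; w] /\ u.1 != w.1 /\ gridpt u = gridpt w.

Definition link_rows (R : pzRingType) L M N (e : {set vert L M N})
  : seq 'rV[R]_#|{: coord L M N}| :=
  match enum e with
  | [:: u; w] => [seq link_row R u w ax | ax <- enum 'I_3]
  | _ => [::]
  end.

Definition all_rows (R : pzRingType) (l : R) L M N (P : link_pattern L M N)
  : seq 'rV[R]_#|{: coord L M N}| :=
  cube_rows l L M N ++ flatten [seq link_rows R e | e <- enum P].

Definition rigidity_matrix (R : pzRingType) (l : R) L M N (P : link_pattern L M N)
  : 'M[R]_(size (all_rows l P), #|{: coord L M N}|) :=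
  \matrix_(i < size (all_rows l P)) nth 0 (all_rows l P) i.

Definition dof (R : fieldType) (l : R) L M N (P : link_pattern L M N) : nat :=
  (24 * L * M * N - \rank (rigidity_matrix l P))%N.

Definition rigidifies (R : fieldType) (l : R) L M N (P : link_pattern L M N) : Prop :=
  dof l P = 6%N.

Definition is_delta3D (R : fieldType) (l : R) (L M N n : nat) : Prop :=
  (exists P : link_pattern L M N, valid_pattern P /\ rigidifies l P /\ #|P| = n) /\
  (forall P : link_pattern L M N, valid_pattern P -> rigidifies l P -> (n <= #|P|)%N).

(* Lower bound ([rigidifies_card]): the rigidity matrix has 18 rows per cube
   and 3 rows per link, so with n links rank A <= 18 L^3 + 3 n, and
   d = 24 L^3 - rank A = 6 forces n >= 2 L^3 - 2.

   Upper bound: an explicit pattern [Pat] with two links for each cube other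
   than the origin cube ([card_Pat]).  The grid is swept layer by layer (see
   [phase] and [depth]); each layer is tiled by small pieces, cycles of 3, 4 or
   6 cubes given by tables.  Every cube is linked to its parent in the previous
   layer and to the next cube of its piece, at a common corner ([Pat_valid]).
   To compute d we determine the kernel of the rigidity matrix:
   - one cube alone moves rigidly under its 18 constraints ([cube_rigid]), so an
     infinitesimal motion gives each cube a rigid velocity field [vfield];
   - if the parents of a piece move with the origin cube, the link equations
     of the piece force its cubes to do so as well: for each of the nine kinds
     of pieces this is a small linear system ([piece_rigid]); by induction on
     the depth, all cubes move with the origin cube ([all_move_with_origin]);
   - hence the kernel is spanned by the six rigid motions of space, which are
     infinitesimal motions of every pattern and independent, so d = 6
     ([dof_Pat]). *)

From HB Require Import structures.
From mathcomp Require Import all_boot all_order all_algebra.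
From mathcomp Require Import zify ring lra.
(* Imported last so that [Defs.coord] shadows [vector.coord]. *)
From Pilot Require Import Defs.
Set Implicit Arguments. Unset Strict Implicit. Unset Printing Implicit Defensive.
Import Order.TTheory GRing.Theory Num.Theory.
Local Open Scope ring_scope.

Lemma rank_of_kernel (F : fieldType) m n k (A : 'M[F]_(m, n)) (G : 'M_(k, n)) :
  (forall x : 'rV_n, x *m A^T = 0 -> (x <= G)%MS) -> G *m A^T = 0 -> row_free G ->
  \rank A = (n - k)%N.
Proof.
move=> kerG GA freeG.
have kerE : (kermx A^T == G)%MS.
  apply/andP; split; last by rewrite sub_kermx GA.
  by apply/row_subP => i; apply: kerG; rewrite -row_mul mulmx_ker row0.
have := eqmx_rank kerE; rewrite mxrank_ker mxrank_tr (eqP freeG).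
have := rank_leq_col A; lia.
Qed.

Lemma card_coord (L M N : nat) : #|{: coord L M N}| = (24 * L * M * N)%N.
Proof. by rewrite !card_prod !card_ord; ring. Qed.

(** * Lower bound: counting rows *)

Definition cube_pair (pq : corner * corner) : bool :=
  (corner_code pq.1 < corner_code pq.2)%N &&
  ((hamming pq.1 pq.2 == 1%N) || ((hamming pq.1 pq.2 == 2%N) && corner_even pq.1)).

Definition b0 : 'I_2 := @Ordinal 2 0 isT.
Definition b1 : 'I_2 := @Ordinal 2 1 isT.

Lemma size_cube_pairs :
  (size [seq pq <- enum {: corner * corner} | cube_pair pq] <= 18)%N.
Proof.
pose corners := [:: (b0,b0,b0); (b0,b0,b1); (b0,b1,b0); (b0,b1,b1);
                    (b1,b0,b0); (b1,b0,b1); (b1,b1,b0); (b1,b1,b1)].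
have -> : 18%N = size [seq pq <- [seq (p, q) | p <- corners, q <- corners] | cube_pair pq]
  by [].
apply: uniq_leq_size; first by rewrite filter_uniq ?enum_uniq.
move=> [[[a b] c] [[d e] f]]; rewrite !mem_filter => /andP [pairP _].
rewrite pairP /=; move: a b c d e f pairP.
by do 6! (case=> [[|[|//]]] ?); rewrite /cube_pair /=.
Qed.

Lemma size_all_rows (R : pzRingType) (l : R) (L M N : nat) (P : link_pattern L M N) :
  (size (all_rows l P) <= 18 * (L * M * N) + 3 * #|P|)%N.
Proof.
rewrite /all_rows size_cat; apply: leq_add.
  rewrite /cube_rows size_allpairs -cardE !card_prod !card_ord mulnC leq_mul2r.
  by rewrite size_cube_pairs orbT.
rewrite size_flatten cardE; elim: (enum P) => [|e s IHs] //=.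
rewrite mulnS; apply: leq_add => //.
rewrite /link_rows; case: (enum e) => [|u [|w [|? ?]]] //=.
by rewrite size_map size_enum_ord.
Qed.

(* Since rank A <= #rows, a rigidifying pattern needs at least 2 LMN - 2 links. *)
Lemma rigidifies_card (R : fieldType) (l : R) (L M N : nat) (P : link_pattern L M N) :
  rigidifies l P -> (2 * (L * M * N) - 2 <= #|P|)%N.
Proof.
rewrite /rigidifies /dof => dof6.
have := rank_leq_row (rigidity_matrix l P); have := size_all_rows l P; lia.
Qed.

(** * Kernel vectors and the constraints they satisfy *)

(* A vector x with x A^T = 0 is an infinitesimal motion; [velo x v ax] is the
   velocity of vertex v along axis ax. *)
Section Kernel.
Variables (R : fieldType) (L M N : nat).
Local Notation Nc := #|{: coord L M N}|.
Implicit Types (x : 'rV[R]_Nc).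

Definition velo x (v : vert L M N) (ax : 'I_3) : R := x 0 (enum_rank (v, ax)).

Lemma dot_coordE x (r : 'rV[R]_Nc) :
  \sum_j x 0 j * r 0 j =
  \sum_(v : vert L M N) \sum_(ax < 3) velo x v ax * r 0 (enum_rank (v, ax)).
Proof.
rewrite (reindex (@enum_rank _)) /=; last first.
  by exists enum_val => k _; rewrite ?enum_rankK ?enum_valK.
by rewrite pair_bigA; apply: eq_bigr => -[v ax].
Qed.

Lemma dot_dist_row x (l : R) (u w : vert L M N) : u != w ->
  \sum_j x 0 j * (dist_row l u w) 0 j =
  \sum_(ax < 3) 2 * (pos l u ax - pos l w ax) * (velo x u ax - velo x w ax).
Proof.
move=> uw; rewrite dot_coordE.
under eq_bigr => v _ do under eq_bigr => ax _ do rewrite mxE enum_rankK.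
rewrite (bigD1 u) //= (bigD1 w) /=; last by rewrite eq_sym.
rewrite [X in _ + (_ + X)]big1 ?addr0; last first.
  move=> v /andP [vu vw]; apply: big1 => ax _.
  by rewrite (negbTE vu) (negbTE vw) mulr0.
rewrite -big_split /=; apply: eq_bigr => ax _.
by rewrite !eqxx (eq_sym w u) (negbTE uw); ring.
Qed.

Lemma dot_link_row x (u w : vert L M N) ax : u != w ->
  \sum_j x 0 j * (link_row R u w ax) 0 j = velo x u ax - velo x w ax.
Proof.
move=> uw; rewrite (reindex (@enum_rank _)) /=; last first.
  by exists enum_val => k _; rewrite ?enum_rankK ?enum_valK.
under eq_bigr => k _ do rewrite mxE enum_rankK.
have wu : (w, ax) != (u, ax) by rewrite xpair_eqE eqxx andbT eq_sym.
rewrite (bigD1 (u, ax)) //= (bigD1 (w, ax)) //= big1 ?addr0; last first.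
  by move=> k /andP [k1 k2]; rewrite (negbTE k1) (negbTE k2) mulr0.
by rewrite eqxx (negbTE wu) eqxx /velo; ring.
Qed.

Lemma kernel_row x (l : R) (P : link_pattern L M N) r :
  x *m (rigidity_matrix l P)^T = 0 -> r \in all_rows l P ->
  \sum_j x 0 j * r 0 j = 0.
Proof.
move=> xA rP; have ri : (index r (all_rows l P) < size (all_rows l P))%N.
  by rewrite index_mem.
have := congr1 (fun m : 'rV_(size (all_rows l P)) => m 0 (Ordinal ri)) xA.
by rewrite !mxE /=; under eq_bigr => j _ do rewrite !mxE /= nth_index //.
Qed.

Lemma cube_row_mem (l : R) (P : link_pattern L M N) (c : cube L M N) (p q : corner) :
  cube_pair (p, q) -> dist_row l (c, p) (c, q) \in all_rows l P.
Proof.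
move=> pq; rewrite mem_cat; apply/orP; left.
apply/allpairsP; exists (c, (p, q)); split => //; first by rewrite mem_enum.
by rewrite mem_filter mem_enum andbT.
Qed.

Lemma link_rowsE (e : {set vert L M N}) (u w : vert L M N) :
  e = [set u; w] -> u != w ->
  exists2 ab : vert L M N * vert L M N,
    (ab = (u, w) \/ ab = (w, u)) &
    link_rows R e = [seq link_row R ab.1 ab.2 ax | ax <- enum 'I_3].
Proof.
move=> eE uw.
have size2 : size (enum e) = 2%N by rewrite -cardE eE cards2 uw.
have memE : forall z, z \in enum e -> z = u \/ z = w.
  by move=> z; rewrite mem_enum eE => /set2P.
have := enum_uniq (pred_of_set e); rewrite /link_rows.
case E : (enum e) size2 memE => [|a [|b [|? ?]]] // _ memE.
rewrite /= inE andbT => ab; exists (a, b) => //.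
have bP : b \in [:: a; b] by rewrite !inE eqxx orbT.
have [aE|aE] := memE a (mem_head _ _); have [bE|bE] := memE b bP;
  rewrite aE bE in ab *; by [left | right | rewrite eqxx in ab].
Qed.

Lemma kernel_link x (l : R) (P : link_pattern L M N) (u w : vert L M N) :
  x *m (rigidity_matrix l P)^T = 0 -> [set u; w] \in P -> u != w ->
  forall ax, velo x u ax = velo x w ax.
Proof.
move=> xA uwP uw ax.
have [[a b] abE rowsE] := link_rowsE (erefl [set u; w]) uw.
have ab : a != b by case: abE => -[-> ->] //; rewrite eq_sym.
have rowP : link_row R a b ax \in all_rows l P.
  rewrite mem_cat; apply/orP; right; apply/flatten_mapP; exists [set u; w].
    by rewrite mem_enum.
  by rewrite rowsE; apply: map_f; rewrite mem_enum.
move/eqP: (kernel_row xA rowP); rewrite dot_link_row // subr_eq0 => /eqP.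
by case: abE => -[-> ->].
Qed.

End Kernel.

(** * A single cube moves rigidly *)

Definition ax0 : 'I_3 := @Ordinal 3 0 isT.
Definition ax1 : 'I_3 := @Ordinal 3 1 isT.
Definition ax2 : 'I_3 := @Ordinal 3 2 isT.

Lemma ord3_cases (ax : 'I_3) : ax = ax0 \/ ax = ax1 \/ ax = ax2.
Proof.
by case: ax => [[|[|[|//]]] h]; [left | right; left | right; right]; apply: val_inj.
Qed.

Lemma ord2_cases (i : 'I_2) : i = b0 \/ i = b1.
Proof. by case: i => [[|[|//]] h]; [left | right]; apply: val_inj. Qed.

Definition corner_pos (p : corner) (ax : 'I_3) : nat :=
  gridax (val p.1.1, val p.1.2, val p.2) ax.

Section Cube.
Variable R : realFieldType.

Definition cross (w p : 'I_3 -> R) (ax : 'I_3) : R :=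
  if val ax == 0%N then w ax1 * p ax2 - w ax2 * p ax1
  else if val ax == 1%N then w ax2 * p ax0 - w ax0 * p ax2
  else w ax0 * p ax1 - w ax1 * p ax0.

Lemma sum3 (F : 'I_3 -> R) : \sum_(i < 3) F i = F ax0 + F ax1 + F ax2.
Proof.
rewrite !big_ord_recr big_ord0 /= add0r.
by congr (_ + _ + _); apply: congr1; apply: val_inj.
Qed.

Variable V : corner -> 'I_3 -> R.
Hypothesis cubeV : forall p q, cube_pair (p, q) ->
  \sum_(ax < 3) ((corner_pos p ax)%:R - (corner_pos q ax)%:R) * (V p ax - V q ax) = 0.

(* Translation and angular velocity of the cube, read off at its lower corner. *)
Definition cube_trans (ax : 'I_3) : R := V (b0,b0,b0) ax.
Definition cube_rot (ax : 'I_3) : R :=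
  if val ax == 0%N then V (b0,b1,b0) ax2 - V (b0,b0,b0) ax2
  else if val ax == 1%N then V (b0,b0,b0) ax2 - V (b1,b0,b0) ax2
  else V (b1,b0,b0) ax1 - V (b0,b0,b0) ax1.

Lemma cube_rigid p ax :
  V p ax = cube_trans ax + cross cube_rot (fun a => (corner_pos p a)%:R) ax.
Proof.
move: (cubeV (p := (b0,b0,b0)) (q := (b0,b0,b1)) isT)
  (cubeV (p := (b0,b0,b0)) (q := (b0,b1,b0)) isT)
  (cubeV (p := (b0,b0,b0)) (q := (b1,b0,b0)) isT)
  (cubeV (p := (b0,b0,b0)) (q := (b0,b1,b1)) isT)
  (cubeV (p := (b0,b0,b0)) (q := (b1,b0,b1)) isT)
  (cubeV (p := (b0,b0,b0)) (q := (b1,b1,b0)) isT)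
  (cubeV (p := (b0,b0,b1)) (q := (b0,b1,b1)) isT)
  (cubeV (p := (b0,b0,b1)) (q := (b1,b0,b1)) isT)
  (cubeV (p := (b0,b1,b0)) (q := (b0,b1,b1)) isT)
  (cubeV (p := (b0,b1,b0)) (q := (b1,b1,b0)) isT)
  (cubeV (p := (b0,b1,b1)) (q := (b1,b1,b1)) isT)
  (cubeV (p := (b1,b0,b0)) (q := (b1,b0,b1)) isT)
  (cubeV (p := (b1,b0,b0)) (q := (b1,b1,b0)) isT)
  (cubeV (p := (b1,b0,b1)) (q := (b1,b1,b1)) isT)
  (cubeV (p := (b1,b1,b0)) (q := (b1,b1,b1)) isT)
  (cubeV (p := (b0,b1,b1)) (q := (b1,b0,b1)) isT)
  (cubeV (p := (b0,b1,b1)) (q := (b1,b1,b0)) isT)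
  (cubeV (p := (b1,b0,b1)) (q := (b1,b1,b0)) isT).
rewrite !sum3 /corner_pos /cube_trans /cube_rot /cross /=.
case: p => [[i j] k].
case: (ord2_cases i) => ->; case: (ord2_cases j) => ->; case: (ord2_cases k) => ->;
  case: (ord3_cases ax) => [->|[->|->]] /=; move=> *; lra.
Qed.

End Cube.

(** * The link pattern, in integer coordinates *)

Definition triple := (nat * nat * nat)%type.

(* Segments: [0, n) (n >= 2) is cut into consecutive segments of length 2,
   the last one of length 3 when n is odd. *)
Definition seg_start (n i : nat) : nat :=
  if (n %% 2 == 1)%N && (n - 3 <= i)%N then (n - 3)%N else (i - i %% 2)%N.
Definition seg_len (n i : nat) : nat :=
  if (n %% 2 == 1)%N && (n - 3 <= i)%N then 3%N else 2%N.

Lemma seg_bounds (n i : nat) : (2 <= n)%N -> (i < n)%N ->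
  [/\ (seg_start n i <= i)%N, (i < seg_start n i + seg_len n i)%N,
      (seg_start n i + seg_len n i <= n)%N & (seg_len n i == 2) || (seg_len n i == 3)]%N.
Proof.
rewrite /seg_start /seg_len => n2 ni.
by case: ifP => [/andP [/eqP odd_n last_seg]|not_last]; split => //; lia.
Qed.

Lemma seg_start_stable (n i j : nat) : (2 <= n)%N -> (i < n)%N -> (j < seg_len n i)%N ->
  [/\ seg_start n (seg_start n i + j) = seg_start n i,
      seg_len n (seg_start n i + j) = seg_len n i & (seg_start n i + j < n)%N].
Proof.
rewrite /seg_start /seg_len => n2 ni; case: ifP => [/andP [/eqP odd_n last_seg] j3|].
  have -> : (n %% 2 == 1)%N && (n - 3 <= n - 3 + j)%N.
    by apply/andP; split; [apply/eqP | lia].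
  by split => //; lia.
move/negbT; rewrite negb_and -ltnNge => not_last j2.
have -> : ((n %% 2 == 1)%N && (n - 3 <= i - i %% 2 + j)%N) = false.
  case: ((n %% 2)%N =P 1%N) not_last => //= odd_n i_lt.
  by apply/negbTE; rewrite -ltnNge; lia.
by split => //; lia.
Qed.

(* A block of 2x2, 2x3, 3x2 or 3x3 cells is covered by one piece,
   except 3x3 which is split into a triangle and a hexagon: shapes 0..4.
   Each shape lists its cells (in cyclic order), and for its j-th cell the
   offset (dt, du, dv) of the corner shared with the parent cell in the
   previous layer, and of the corner shared with the next cell of the cycle. *)
Definition shape_cells : seq (seq (nat * nat)) :=
  [:: [:: (0,0); (1,0); (1,1); (0,1)];
      [:: (0,0); (1,0); (1,1); (1,2); (0,2); (0,1)];
      [:: (0,0); (1,0); (2,0); (2,1); (1,1); (0,1)];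
      [:: (0,0); (1,0); (0,1)];
      [:: (2,0); (2,1); (2,2); (1,2); (0,2); (1,1)]].
Definition shape_atts : seq (seq triple) :=
  [:: [:: (0,1,0); (0,2,0); (0,1,2); (0,0,2)];
      [:: (0,0,0); (0,2,1); (0,2,2); (0,1,2); (0,0,2); (0,0,1)];
      [:: (0,1,0); (0,2,1); (0,3,1); (0,3,2); (0,1,1); (0,1,2)];
      [:: (0,0,1); (0,1,0); (0,0,2)];
      [:: (0,3,1); (0,2,2); (0,3,2); (0,2,2); (0,0,3); (0,1,2)]].
Definition shape_cycs : seq (seq triple) :=
  [:: [:: (1,1,0); (1,2,1); (1,1,2); (1,0,1)];
      [:: (1,1,0); (0,1,1); (1,2,2); (1,1,3); (1,1,2); (0,1,1)];
      [:: (1,1,0); (0,2,0); (1,3,1); (0,2,2); (1,1,2); (0,0,1)];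
      [:: (1,1,0); (0,1,1); (1,1,1)];
      [:: (1,2,1); (1,3,2); (1,2,3); (0,1,3); (1,1,2); (0,2,1)]].

Definition cyc_next (n j : nat) : nat := if j.+1 == n then 0%N else j.+1.

Definition shape_size (s : nat) : nat := size (nth [::] shape_cells s).
Definition shape_cell (s j : nat) : nat * nat := nth (0,0)%N (nth [::] shape_cells s) j.
Definition shape_index (s du dv : nat) : nat := index (du,dv) (nth [::] shape_cells s).
Definition shape_att (s j : nat) : triple := nth (0,0,0)%N (nth [::] shape_atts s) j.
Definition shape_cyc (s j : nat) : triple := nth (0,0,0)%N (nth [::] shape_cycs s) j.
Definition shape_next (s j : nat) : nat := cyc_next (shape_size s) j.

Lemma size_shape_atts s : size (nth [::] shape_atts s) = shape_size s.
Proof. by rewrite /shape_size; case: s => [|[|[|[|[|s]]]]] //=; rewrite !nth_nil. Qed.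

Definition shape_of (lu lv du dv : nat) : nat :=
  if lu == 2%N then (if lv == 2%N then 0%N else 1%N)
  else if lv == 2%N then 2%N else if (du + dv <= 1)%N then 3%N else 4%N.

Definition corner2 (c : nat * nat) (p : nat * nat) : bool :=
  (c.1 <= p.1 <= c.1.+1)%N && (c.2 <= p.2 <= c.2.+1)%N.

Definition shape_cell_ok (lu lv s j : nat) : bool :=
  let c := shape_cell s j in let c' := shape_cell s (shape_next s j) in
  let a := shape_att s j in let y := shape_cyc s j in
  [&& (c.1 < lu)%N, (c.2 < lv)%N, shape_of lu lv c.1 c.2 == s, shape_index s c.1 c.2 == j,
      c' != c, (shape_next s j < shape_size s)%N,
      a.1.1 == 0%N, corner2 c (a.1.2, a.2),
      (y.1.1 <= 1)%N, corner2 c (y.1.2, y.2) & corner2 c' (y.1.2, y.2)].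

Definition shapes_ok : bool :=
  all (fun lu => all (fun lv => all (fun du => all (fun dv =>
    let s := shape_of lu lv du dv in
    [&& (shape_index s du dv < shape_size s)%N, shape_cell s (shape_index s du dv) == (du,dv) &
        all (shape_cell_ok lu lv s) (iota 0 (shape_size s))])
    (iota 0 lv)) (iota 0 lu)) [:: 2; 3]%N) [:: 2; 3]%N.

Lemma shapesP lu lv du dv : (lu == 2)%N || (lu == 3)%N -> (lv == 2)%N || (lv == 3)%N ->
  (du < lu)%N -> (dv < lv)%N ->
  let s := shape_of lu lv du dv in
  [/\ (shape_index s du dv < shape_size s)%N, shape_cell s (shape_index s du dv) = (du,dv) &
      forall j, (j < shape_size s)%N -> shape_cell_ok lu lv s j].
Proof.
move=> lu23 lv23 du_lt dv_lt s.
have : shapes_ok by [].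
have luP : lu \in [:: 2; 3]%N by rewrite !inE.
have lvP : lv \in [:: 2; 3]%N by rewrite !inE.
move/allP/(_ _ luP)/allP/(_ _ lvP)/allP/(_ du)/(_ _)/allP/(_ dv)/(_ _).
rewrite !mem_iota /= => /(_ du_lt)/(_ dv_lt)/and3P [idx_lt /eqP cellE /allP cellsP].
by split => // j j_lt; apply: cellsP; rewrite mem_iota.
Qed.

Section Pattern.
Variable L : nat.
Local Open Scope nat_scope.

(* The L x L x L grid is cut into four regions ("phases"):
   0 : x >= 2,   layers x = t, cells (y, z) in L x L;
   1 : x < 2 <= y,   layers y = t, cells (x, z) in 2 x L;
   2 : x, y < 2 and z >= 1,   layers z = t, cells (x, y) in 2 x 2;
   3 : the four cubes x, y < 2, z = 0, among them the origin cube. *)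
Definition phase (c : triple) : nat :=
  let: (x, y, z) := c in
  if 2 <= x then 0 else if 2 <= y then 1 else if 1 <= z then 2 else 3.
Definition layer_coords (c : triple) : triple :=
  let: (x, y, z) := c in
  if 2 <= x then (x, y, z) else if 2 <= y then (y, x, z) else (z, x, y).
Definition unlayer (d t u v : nat) : triple :=
  if d == 0 then (t, u, v) else if d == 1 then (u, t, v) else (u, v, t).
Definition frame_pt d t u0 v0 (a : triple) : triple :=
  unlayer d (t + a.1.1) (u0 + a.1.2) (v0 + a.2).
Definition width_u (d : nat) : nat := if d == 0 then L else 2.
Definition width_v (d : nat) : nat := if d <= 1 then L else 2.

Definition in_grid (c : triple) : bool := [&& c.1.1 < L, c.1.2 < L & c.2 < L].
Definition in_layer (d t u v : nat) : Prop :=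
  [/\ d < 3, (if d == 2 then 1 else 2) <= t < L, u < width_u d & v < width_v d].

Lemma layer_coords_unlayer d t u v : in_layer d t u v ->
  phase (unlayer d t u v) = d /\ layer_coords (unlayer d t u v) = (t, u, v).
Proof.
case=> d3 /andP [t_ge _] u_lt v_lt; rewrite /phase /layer_coords /unlayer.
case: d d3 t_ge u_lt v_lt => [|[|[|//]]] _ /= t_ge u_lt v_lt; first by rewrite t_ge.
- rewrite /width_u /= in u_lt.
  have -> : (2 <= u) = false by lia.
  by rewrite t_ge.
- rewrite /width_u /width_v /= in u_lt v_lt.
  have -> : (2 <= u) = false by lia.
  have -> : (2 <= v) = false by lia.
  by rewrite t_ge.
Qed.

Lemma unlayer_layer_coords c : in_grid c -> phase c < 3 ->
  let: (t, u, v) := layer_coords c in in_layer (phase c) t u v /\ c = unlayer (phase c) t u v.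
Proof.
case: c => [[x y] z] /and3P [/= x_lt y_lt z_lt].
rewrite /phase /layer_coords /unlayer /in_layer /width_u /width_v.
case: (leqP 2 x) => x2 /=; first by split => //; split => //; lia.
case: (leqP 2 y) => y2 /=; first by split => //; split => //; lia.
by case: (leqP 1 z) => z1 //= _; split => //; split => //; lia.
Qed.

Definition piece_u0 d u := seg_start (width_u d) u.
Definition piece_v0 d v := seg_start (width_v d) v.
Definition piece_shape d u v :=
  shape_of (seg_len (width_u d) u) (seg_len (width_v d) v) (u - piece_u0 d u) (v - piece_v0 d v).
Definition piece_index d u v :=
  shape_index (piece_shape d u v) (u - piece_u0 d u) (v - piece_v0 d v).

Definition piece_pt d t u v (a : triple) : triple :=
  frame_pt d t (piece_u0 d u) (piece_v0 d v) a.
Definition member d t u v j : triple :=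
  let c := shape_cell (piece_shape d u v) j in
  unlayer d t (piece_u0 d u + c.1) (piece_v0 d v + c.2).

(* In layered coordinates: the parent cube, the corner shared with it, the
   next cube of the piece and the corner shared with it. *)
Definition parent_l d t u v : triple := unlayer d (t - 1) u v.
Definition attach_l d t u v : triple :=
  piece_pt d t u v (shape_att (piece_shape d u v) (piece_index d u v)).
Definition next_l d t u v : triple :=
  member d t u v (shape_next (piece_shape d u v) (piece_index d u v)).
Definition cycle_l d t u v : triple :=
  piece_pt d t u v (shape_cyc (piece_shape d u v) (piece_index d u v)).

(* The base piece: the three cubes of phase 3 other than the origin cube,
   all attached to the origin cube. *)
Definition base_cells : seq triple := [:: (1,0,0); (0,1,0); (1,1,0)].
Definition base_atts : seq triple := [:: (1,0,0); (0,1,0); (1,1,0)].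
Definition base_cycs : seq triple := [:: (1,1,1); (1,2,0); (2,1,1)].

Definition by_phase (f : nat -> nat -> nat -> nat -> triple) (base : seq triple)
    (c : triple) : triple :=
  if phase c < 3 then let: (t, u, v) := layer_coords c in f (phase c) t u v
  else nth (0,0,0) base (index c base_cells).

Definition parent := by_phase parent_l [:: (0,0,0); (0,0,0); (0,0,0)].
Definition attach_pt := by_phase attach_l base_atts.
Definition next_cube := by_phase next_l [:: (0,1,0); (1,1,0); (1,0,0)].
Definition cycle_pt := by_phase cycle_l base_cycs.

(* Induction measure: phase 3, then the layers of phases 2, 1, 0 in order. *)
Definition depth (c : triple) : nat :=
  let: (t, _, _) := layer_coords c in
  if phase c == 0 then 2 * L + t else if phase c == 1 then L + t
  else if phase c == 2 then t else 0.

Definition is_corner (c X : triple) : bool :=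
  [&& c.1.1 <= X.1.1 <= c.1.1.+1, c.1.2 <= X.1.2 <= c.1.2.+1 & c.2 <= X.2 <= c.2.+1].

Lemma unlayer_inj d a b c a' b' c' : d < 3 ->
  (unlayer d a b c == unlayer d a' b' c') = [&& a == a', b == b' & c == c'].
Proof.
rewrite /unlayer => _.
by case: ifP => _ /=; [|case: ifP => _ /=]; rewrite !xpair_eqE;
  case: (a == a'); case: (b == b'); case: (c == c').
Qed.

Lemma is_corner_unlayer d a b c a' b' c' :
  is_corner (unlayer d a b c) (unlayer d a' b' c') =
  [&& a <= a' <= a.+1, b <= b' <= b.+1 & c <= c' <= c.+1].
Proof.
rewrite /is_corner /unlayer.
by case: ifP => _ /=; [|case: ifP => _ /=];
  case: (a <= a' <= a.+1); case: (b <= b' <= b.+1); case: (c <= c' <= c.+1).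
Qed.

Lemma depthE x y z : depth (x, y, z) =
  if 2 <= x then 2 * L + x else if 2 <= y then L + y else if 1 <= z then z else 0.
Proof.
rewrite /depth /phase /layer_coords /=.
by case: (leqP 2 x) => //= _; case: (leqP 2 y) => //= _; case: (leqP 1 z).
Qed.

Lemma depth_parent d t u v : in_layer d t u v ->
  depth (parent_l d t u v) < depth (unlayer d t u v).
Proof.
case=> d3 /andP [t_ge _] u_lt v_lt.
rewrite /parent_l /unlayer /width_u /width_v in u_lt v_lt *.
case: d d3 t_ge u_lt v_lt => [|[|[|//]]] _ /= t_ge u_lt v_lt; rewrite !depthE;
  repeat (case: ifP => /=; [move=> ? | move/negbT => ?]); lia.
Qed.

(* Layers of phase 1 have width 2 in u, those of phase 2 width 2 in u and v:
   only shapes 0, 1 (phase 1) and 0 (phase 2) occur there. *)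
Lemma piece_shape_bounds d u v : let s := piece_shape d u v in
  [/\ s < 5, d == 1 -> s <= 1 & d == 2 -> s == 0].
Proof.
rewrite /piece_shape /shape_of /width_u /width_v /seg_len; split.
- by repeat case: ifP.
- by move/eqP => ->; rewrite /=; repeat case: ifP.
- by move/eqP => ->; rewrite /=; repeat case: ifP.
Qed.

Lemma phase3_cases c : in_grid c -> phase c = 3 -> c != (0,0,0) ->
  c = (1,0,0) \/ c = (0,1,0) \/ c = (1,1,0).
Proof.
case: c => [[x y] z] /and3P [/= x_lt y_lt z_lt]; rewrite /phase.
case: (leqP 2 x) => // x2; case: (leqP 2 y) => // y2; case: (leqP 1 z) => // z1 _.
by case: x x2 {x_lt} => [|[|//]] _; case: y y2 {y_lt} => [|[|//]] _;
  case: z z1 {z_lt} => [|//] _ //= _; auto.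
Qed.

Lemma phase_lt3 c : phase c < 3 \/ phase c = 3.
Proof.
case: c => [[x y] z]; rewrite /phase.
by case: ifP => _; [left | case: ifP => _; [left | case: ifP => _; [left | right]]].
Qed.

Hypothesis L2 : 2 <= L.

Lemma in_layer_grid d t u v : in_layer d t u v -> in_grid (unlayer d t u v).
Proof.
case=> d3 /andP [_ t_lt] u_lt v_lt; rewrite /in_grid /unlayer /width_u /width_v in u_lt v_lt *.
by case: d d3 => [|[|[|//]]] _ /= in t_lt u_lt v_lt *; apply/and3P; split; lia.
Qed.

Lemma in_grid_parent d t u v : in_layer d t u v -> in_grid (parent_l d t u v).
Proof.
case=> d3 /andP [t_ge t_lt] u_lt v_lt.
rewrite /parent_l /in_grid /unlayer /width_u /width_v in u_lt v_lt *.
by case: d d3 => [|[|[|//]]] _ /= in t_ge t_lt u_lt v_lt *; apply/and3P; split; lia.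
Qed.

Lemma widths_ge2 d : 2 <= width_u d /\ 2 <= width_v d.
Proof. by rewrite /width_u /width_v; case: (d == 0); case: (d <= 1). Qed.

Lemma piece_cells d t u v : in_layer d t u v ->
  let s := piece_shape d u v in let k := piece_index d u v in
  [/\ k < shape_size s, member d t u v k = unlayer d t u v &
   forall j, j < shape_size s ->
     shape_cell_ok (seg_len (width_u d) u) (seg_len (width_v d) v) s j /\
     let: (u', v') := (piece_u0 d u + (shape_cell s j).1, piece_v0 d v + (shape_cell s j).2) in
     [/\ in_layer d t u' v', piece_u0 d u' = piece_u0 d u, piece_v0 d v' = piece_v0 d v,
         piece_shape d u' v' = s & piece_index d u' v' = j]].
Proof.
case=> d3 t_rng u_lt v_lt /=.
have [wu2 wv2] := widths_ge2 d.
have [u0_le u_lt0 _ lu23] := seg_bounds wu2 u_lt.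
have [v0_le v_lt0 _ lv23] := seg_bounds wv2 v_lt.
have du_lt : u - piece_u0 d u < seg_len (width_u d) u by rewrite /piece_u0; lia.
have dv_lt : v - piece_v0 d v < seg_len (width_v d) v by rewrite /piece_v0; lia.
have [idx_lt cellE cellsP] := shapesP lu23 lv23 du_lt dv_lt.
split => //.
  by rewrite /member cellE /= /piece_u0 /piece_v0 !subnKC.
move=> j j_lt; have cellP := cellsP j j_lt; split => //.
move: cellP; rewrite /shape_cell_ok => /and4P [cu_lt cv_lt /eqP shapeE /and5P [/eqP idxE _ _ _ _]].
have [su1 su2 su3] := seg_start_stable wu2 u_lt cu_lt.
have [sv1 sv2 sv3] := seg_start_stable wv2 v_lt cv_lt.
rewrite /piece_index /piece_shape /piece_u0 /piece_v0 in shapeE idxE *.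
by rewrite su1 sv1 su2 sv2 !addKn shapeE idxE.
Qed.

Lemma link_ends_layer d t u v : in_layer d t u v ->
  [/\ in_grid (parent_l d t u v), parent_l d t u v != unlayer d t u v,
      is_corner (unlayer d t u v) (attach_l d t u v) &
      is_corner (parent_l d t u v) (attach_l d t u v)] /\
  [/\ in_grid (next_l d t u v), next_l d t u v != unlayer d t u v,
      is_corner (unlayer d t u v) (cycle_l d t u v) &
      is_corner (next_l d t u v) (cycle_l d t u v)].
Proof.
move=> layer; have [idx_lt memberE cellsP] := piece_cells layer.
have [cellP _] := cellsP _ idx_lt.
have [wu2 wv2] := widths_ge2 d.
have [d3 /andP [t_ge _] u_lt v_lt] := layer.
have [u0_le _ _ _] := seg_bounds wu2 u_lt; have [v0_le _ _ _] := seg_bounds wv2 v_lt.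
move: memberE cellP; rewrite /member /shape_cell_ok.
case E : (shape_cell _ (piece_index d u v)) => [cu cv] /=.
rewrite /piece_u0 /piece_v0 in E *.
move/eqP; rewrite unlayer_inj // => /and3P [_ /eqP cuE /eqP cvE].
case/and4P => _ _ _ /and5P [_ next_ne next_lt /eqP att0 /and4P [att_c cyc_t cyc_c cyc_n]].
have [_] := cellsP _ next_lt.
rewrite /next_l /member /attach_l /cycle_l /parent_l /piece_pt /frame_pt /piece_u0 /piece_v0.
case: (shape_cell _ (shape_next _ _)) next_ne cyc_n => [nu nv] next_ne cyc_n /=.
case=> next_layer _ _ _ _.
rewrite /corner2 /= in att_c cyc_c cyc_n next_ne.
split; split.
- exact: in_grid_parent layer.
- rewrite unlayer_inj // negb_and; apply/orP; left; apply/eqP.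
  by case: (d == 2) in t_ge; lia.
- by rewrite is_corner_unlayer att0; apply/and3P; split; try (apply/andP; split); lia.
- by rewrite is_corner_unlayer att0; apply/and3P; split; try (apply/andP; split); lia.
- exact: in_layer_grid next_layer.
- rewrite unlayer_inj // eqxx /=; move: next_ne; rewrite xpair_eqE negb_and.
  by case/orP => ne; apply/nandP; [left | right]; move: ne; apply: contra => /eqP ne;
    apply/eqP; lia.
- by rewrite is_corner_unlayer; apply/and3P; split; try (apply/andP; split); lia.
- by rewrite is_corner_unlayer; apply/and3P; split; try (apply/andP; split); lia.
Qed.

Lemma link_ends c : in_grid c -> c != (0,0,0) ->
  [/\ in_grid (parent c), parent c != c, is_corner c (attach_pt c) &
      is_corner (parent c) (attach_pt c)] /\
  [/\ in_grid (next_cube c), next_cube c != c, is_corner c (cycle_pt c) &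
      is_corner (next_cube c) (cycle_pt c)].
Proof.
move=> c_grid c0; case: (phase_lt3 c) => ph.
  have := unlayer_layer_coords c_grid ph.
  rewrite /parent /attach_pt /next_cube /cycle_pt /by_phase ph.
  case: (layer_coords c) => [[t u] v] [layer cE].
  by have := link_ends_layer layer; rewrite -cE.
have L0 : 0 < L by lia.
by case: (phase3_cases c_grid ph c0) => [->|[->|->]];
  rewrite /parent /attach_pt /next_cube /cycle_pt /by_phase /= /in_grid /=;
  repeat split => //; apply/and3P; split; lia.
Qed.

Lemma piece_members d t u v j : in_layer d t u v -> j < shape_size (piece_shape d u v) ->
  let s := piece_shape d u v in
  let m := member d t u v j in
  let: (u', v') := (piece_u0 d u + (shape_cell s j).1, piece_v0 d v + (shape_cell s j).2) in
  [/\ in_layer d t u' v', depth m = depth (unlayer d t u v),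
      parent m = unlayer d (t - 1) u' v', attach_pt m = piece_pt d t u v (shape_att s j) &
      next_cube m = member d t u v (shape_next s j) /\
      cycle_pt m = piece_pt d t u v (shape_cyc s j)].
Proof.
move=> layer j_lt s m; have [_ _ cellsP] := piece_cells layer.
have [_] := cellsP _ j_lt.
case=> layer' u0E v0E shapeE idxE.
have [ph_m coords_m] := layer_coords_unlayer layer'.
have [ph coords] := layer_coords_unlayer layer.
rewrite /parent /attach_pt /next_cube /cycle_pt /by_phase /m /member -/s.
rewrite ph_m coords_m /=; have [d3 _ _ _] := layer; rewrite d3.
split => //.
- by rewrite /depth /member -/s coords_m coords ph_m ph.
- by rewrite /attach_l /piece_pt /frame_pt u0E v0E shapeE idxE.
- by rewrite /next_l /cycle_l /member /piece_pt /frame_pt u0E v0E shapeE idxE.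
Qed.

End Pattern.

Section Assembly.
Variable K : nat.
Local Notation L := K.+1.
Local Notation cubeL := (cube L L L).

Lemma L_ge2 : (0 < K)%N -> (2 <= L)%N. Proof. by rewrite ltnS. Qed.

Definition cube_pt (c : cubeL) : triple := (val c.1.1, val c.1.2, val c.2).
Definition pt_cube (t : triple) : cubeL := (inord t.1.1, inord t.1.2, inord t.2).
Definition pt_corner (p : triple) : corner := (inord p.1.1, inord p.1.2, inord p.2).
Definition sub_pt (X c : triple) : triple := (X.1.1 - c.1.1, X.1.2 - c.1.2, X.2 - c.2)%N.

Definition mk_link (c d X : triple) : {set vert L L L} :=
  [set (pt_cube c, pt_corner (sub_pt X c)); (pt_cube d, pt_corner (sub_pt X d))].

Definition attach_link (c : cubeL) :=
  mk_link (cube_pt c) (parent (cube_pt c)) (attach_pt L (cube_pt c)).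
Definition cycle_link (c : cubeL) :=
  mk_link (cube_pt c) (next_cube L (cube_pt c)) (cycle_pt L (cube_pt c)).
Definition nonorigin : {set cubeL} := [set c | cube_pt c != (0,0,0)%N].

Definition Pat : link_pattern L L L := (attach_link @: nonorigin) :|: (cycle_link @: nonorigin).

Lemma cube_pt_grid c : in_grid L (cube_pt c).
Proof. by rewrite /in_grid /cube_pt /= !ltn_ord. Qed.

Lemma cube_ptK c : pt_cube (cube_pt c) = c.
Proof. by case: c => [[x y] z]; rewrite /pt_cube /cube_pt /= !inord_val. Qed.

Lemma pt_cubeK t : in_grid L t -> cube_pt (pt_cube t) = t.
Proof.
by case: t => [[x y] z] /and3P [/= x_lt y_lt z_lt]; rewrite /pt_cube /cube_pt /= !inordK.
Qed.

Lemma gridpt_pt_cube (t X : triple) : in_grid L t -> is_corner t X ->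
  gridpt (pt_cube t, pt_corner (sub_pt X t)) = X.
Proof.
case: t => [[x y] z]; case: X => [[a b] c] /and3P [/= x_lt y_lt z_lt].
case/and3P => /= /andP [xa ax] /andP [yb bz] /andP [zc cz].
by rewrite /gridpt /pt_cube /pt_corner /sub_pt /= !inordK; [congr (_, _, _) | ..]; lia.
Qed.

Lemma mk_link_valid (c d X : triple) : in_grid L c -> in_grid L d -> c != d ->
  is_corner c X -> is_corner d X ->
  let u := (pt_cube c, pt_corner (sub_pt X c)) in
  let w := (pt_cube d, pt_corner (sub_pt X d)) in
  [/\ mk_link c d X = [set u; w], u.1 != w.1 & gridpt u = gridpt w].
Proof.
move=> c_grid d_grid cd cX dX u w; split => //.
  by apply: contra cd => /eqP /= cdE; rewrite -(pt_cubeK c_grid) -(pt_cubeK d_grid) cdE.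
by rewrite /u /w (gridpt_pt_cube c_grid cX) (gridpt_pt_cube d_grid dX).
Qed.

Lemma Pat_valid : (0 < K)%N -> valid_pattern Pat.
Proof.
move=> K0 e; rewrite inE => /orP [] /imsetP [c]; rewrite inE => c0 ->;
  have [[p_grid p_ne p_corner p_corner'] [n_grid n_ne n_corner n_corner']] :=
    link_ends (L_ge2 K0) (cube_pt_grid c) c0.
- rewrite eq_sym in p_ne.
  have [eE uw gE] := mk_link_valid (cube_pt_grid c) p_grid p_ne p_corner p_corner'.
  by do 2 eexists; split; [exact: eE | ..].
- rewrite eq_sym in n_ne.
  have [eE uw gE] := mk_link_valid (cube_pt_grid c) n_grid n_ne n_corner n_corner'.
  by do 2 eexists; split; [exact: eE | ..].
Qed.

Definition origin : cubeL := pt_cube (0,0,0)%N.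

Lemma cube_pt_origin : cube_pt origin = (0,0,0)%N.
Proof. by rewrite pt_cubeK. Qed.

Lemma card_Pat : (#|Pat| <= 2 * (L * L * L).-1)%N.
Proof.
have -> : (L * L * L).-1 = #|nonorigin|.
  have -> : nonorigin = [set~ origin].
    apply/setP => c; rewrite !inE; apply/idP/idP; apply: contra => /eqP cE.
      by rewrite cE cube_pt_origin.
    by rewrite -(cube_ptK c) cE.
  by rewrite cardsC1 !card_prod !card_ord.
apply: leq_trans (leq_card_setU _ _) _.
by rewrite mul2n -addnn; apply: leq_add; apply: leq_imset_card.
Qed.

End Assembly.

(** * Rigidity of a single piece *)

(* The nine kinds of pieces: a phase and the attachment and cycle points of
   its cubes, in layered coordinates relative to the lower corner of the piece. *)
Definition piece_kinds : seq (nat * seq triple * seq triple) :=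
  [seq (ds.1, nth [::] shape_atts ds.2, nth [::] shape_cycs ds.2)
  | ds <- [:: (0,0); (0,1); (0,2); (0,3); (0,4); (1,0); (1,1); (2,0)]]%N
  ++ [:: (0%N, base_atts, base_cycs)].

Lemma layer_piece_kind L d u v : (d < 3)%N ->
  (d, nth [::] shape_atts (piece_shape L d u v), nth [::] shape_cycs (piece_shape L d u v))
  \in piece_kinds.
Proof.
have [] := piece_shape_bounds L d u v; move: (piece_shape L d u v) => s s5 s1 s2.
case: d s1 s2 => [|[|[|//]]] s1 s2 _.
- by case: s s5 s1 s2 => [|[|[|[|[|//]]]]].
- by move: (s1 isT); case: s s5 s1 s2 => [|[|//]].
- by move: (s2 isT); case: s s5 s1 s2 => [|//].
Qed.

Section PieceAlgebra.
Variable R : realFieldType.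

Definition layer_vec (d : nat) (a : triple) : 'I_3 -> R :=
  fun ax => (gridax (unlayer d a.1.1 a.1.2 a.2) ax)%:R.

(* Consider the cubes 0..n-1 of a piece, cube j moving (relatively to the
   origin cube) with translation F j at the lower corner of the piece and
   angular velocity W j.  The piece locks if, whenever each cube is at rest
   at its attachment point and consecutive cubes agree at their common cycle
   point, every W j vanishes. *)
Definition piece_locks (d : nat) (atts cycs : seq triple) : Prop :=
  forall F W : nat -> 'I_3 -> R,
  (forall j, (j < size atts)%N -> forall ax,
     F j ax + cross (W j) (layer_vec d (nth (0,0,0)%N atts j)) ax = 0) ->
  (forall j, (j < size atts)%N -> forall ax,
     F j ax + cross (W j) (layer_vec d (nth (0,0,0)%N cycs j)) ax =
     F (cyc_next (size atts) j) ax
       + cross (W (cyc_next (size atts) j)) (layer_vec d (nth (0,0,0)%N cycs j)) ax) ->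
  forall j, (j < size atts)%N -> forall ax, W j ax = 0.

(* For a given kind this is a small linear system: instantiate all its
   equations and let [lra] solve for each W j ax. *)
Ltac solve_piece :=
  let F := fresh "F" in let W := fresh "W" in let att := fresh "att" in
  let cyc := fresh "cyc" in let j := fresh "j" in let j_lt := fresh "j_lt" in
  let ax := fresh "ax" in
  intros F W att cyc j j_lt ax;
  let n := lazymatch type of j_lt with is_true (_ < ?n)%N => eval compute in n end in
  let rec instantiate_eqs k := lazymatch k with
    | O => idtac
    | S ?m => instantiate_eqs m;
      move: (att m isT ax0) (att m isT ax1) (att m isT ax2)
            (cyc m isT ax0) (cyc m isT ax1) (cyc m isT ax2)
    end in
  instantiate_eqs n; clear att cyc; rewrite /cross /layer_vec /cyc_next /=; move=> *;
  have: j \in iota 0 n; first (by rewrite mem_iota);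
  rewrite /= !inE; repeat case/orP => [/eqP -> | ]; try move/eqP ->;
  case: (ord3_cases ax) => [->|[->|->]]; lra.

Lemma square_locks : piece_locks 0 (nth [::] shape_atts 0) (nth [::] shape_cycs 0).
Proof. solve_piece. Qed.
Lemma long_hexagon_locks : piece_locks 0 (nth [::] shape_atts 1) (nth [::] shape_cycs 1).
Proof. solve_piece. Qed.
Lemma wide_hexagon_locks : piece_locks 0 (nth [::] shape_atts 2) (nth [::] shape_cycs 2).
Proof. solve_piece. Qed.
Lemma triangle_locks : piece_locks 0 (nth [::] shape_atts 3) (nth [::] shape_cycs 3).
Proof. solve_piece. Qed.
Lemma bent_hexagon_locks : piece_locks 0 (nth [::] shape_atts 4) (nth [::] shape_cycs 4).
Proof. solve_piece. Qed.
Lemma square_locks_ph1 : piece_locks 1 (nth [::] shape_atts 0) (nth [::] shape_cycs 0).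
Proof. solve_piece. Qed.
Lemma long_hexagon_locks_ph1 : piece_locks 1 (nth [::] shape_atts 1) (nth [::] shape_cycs 1).
Proof. solve_piece. Qed.
Lemma square_locks_ph2 : piece_locks 2 (nth [::] shape_atts 0) (nth [::] shape_cycs 0).
Proof. solve_piece. Qed.
Lemma base_locks : piece_locks 0 base_atts base_cycs.
Proof. solve_piece. Qed.

Lemma piece_rigid d (atts cycs : seq triple) :
  (d, atts, cycs) \in piece_kinds -> piece_locks d atts cycs.
Proof.
rewrite /piece_kinds /= !inE.
by repeat case/orP => [/eqP [-> -> ->] | ]; try move/eqP => [-> -> ->];
  [exact: square_locks | exact: long_hexagon_locks | exact: wide_hexagon_locks |
   exact: triangle_locks | exact: bent_hexagon_locks | exact: square_locks_ph1 |
   exact: long_hexagon_locks_ph1 | exact: square_locks_ph2 | exact: base_locks].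
Qed.

End PieceAlgebra.

(** * Propagation of the motion of the origin cube *)

Lemma gridax_gridpt L M N (c : cube L M N) (p : corner) ax :
  gridax (gridpt (c, p)) ax = (gridax (val c.1.1, val c.1.2, val c.2) ax + corner_pos p ax)%N.
Proof.
case: c => [[x y] z]; case: p => [[i j] k]; rewrite /gridpt /corner_pos.
by case: (ord3_cases ax) => [->|[->|->]].
Qed.

Lemma cube_pair_neq (p q : corner) : cube_pair (p, q) -> p != q.
Proof. by case/andP => pq _; apply: contraTneq pq => ->; rewrite ltnn. Qed.

Lemma cross0l (R : realFieldType) (w p : 'I_3 -> R) ax :
  (forall a, w a = 0) -> cross w p ax = 0.
Proof. by move=> w0; rewrite /cross !w0 !mul0r subrr; case: ifP => _ //; case: ifP. Qed.

Section Kinematics.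
Variables (R : realFieldType) (l : R) (K : nat).
Hypotheses (l0 : 0 < l) (K0 : (0 < K)%N).
Local Notation L := K.+1.
Local Notation cubeL := (cube L L L).
Variable x : 'rV[R]_#|{: coord L L L}|.
Hypothesis xker : x *m (rigidity_matrix l (Pat K))^T = 0.

Definition corner_vel (c : cubeL) (p : corner) (ax : 'I_3) : R := velo x (c, p) ax.

(* The 18 constraints of cube c, divided by 2 l. *)
Lemma cube_constraints c p q : cube_pair (p, q) ->
  \sum_(ax < 3) ((corner_pos p ax)%:R - (corner_pos q ax)%:R)
                * (corner_vel c p ax - corner_vel c q ax) = 0.
Proof.
move=> pq; have cpq : (c, p) != (c, q) by rewrite xpair_eqE eqxx cube_pair_neq.
have := kernel_row xker (cube_row_mem l (Pat K) c pq); rewrite dot_dist_row //.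
have -> : \sum_(ax < 3) 2 * (pos l (c, p) ax - pos l (c, q) ax)
                       * (velo x (c, p) ax - velo x (c, q) ax)
  = (2 * l) * \sum_(ax < 3) ((corner_pos p ax)%:R - (corner_pos q ax)%:R)
                            * (corner_vel c p ax - corner_vel c q ax).
  rewrite mulr_sumr; apply: eq_bigr => ax _.
  by rewrite /pos /corner_vel !gridax_gridpt !natrD; ring.
by move/eqP; rewrite mulf_eq0 mulf_eq0 pnatr_eq0 (gt_eqF l0) /= => /eqP.
Qed.

Definition pt_vec (X : triple) (a : 'I_3) : R := (gridax X a)%:R.

(* The rigid motion of cube c, extended to the whole space and evaluated at X. *)
Definition vfield (c : cubeL) (X : 'I_3 -> R) (ax : 'I_3) : R :=
  cube_trans (corner_vel c) ax
  + cross (cube_rot (corner_vel c)) (fun a => X a - pt_vec (cube_pt c) a) ax.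

Lemma cross_ext (w w' p p' : 'I_3 -> R) ax :
  (forall a, w a = w' a) -> (forall a, p a = p' a) -> cross w p ax = cross w' p' ax.
Proof. by move=> wE pE; rewrite /cross !wE !pE. Qed.

Lemma vfield_ext c X X' ax : (forall a, X a = X' a) -> vfield c X ax = vfield c X' ax.
Proof. by move=> XE; rewrite /vfield; congr (_ + _); apply: cross_ext => // a; rewrite XE. Qed.

(* Each cube moves rigidly, so its corners follow its velocity field. *)
Lemma corner_vel_field c p ax : corner_vel c p ax = vfield c (pt_vec (gridpt (c, p))) ax.
Proof.
rewrite (cube_rigid (@cube_constraints c)) /vfield; congr (_ + _); apply: cross_ext => // a.
by rewrite /pt_vec gridax_gridpt natrD /cube_pt addrC addKr.
Qed.

Lemma vfield_shift c (X O : 'I_3 -> R) ax :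
  vfield c X ax = vfield c O ax + cross (cube_rot (corner_vel c)) (fun a => X a - O a) ax.
Proof. by rewrite /vfield /cross; case: ifP => _; [|case: ifP => _]; ring. Qed.

Lemma link_vfield (c d X : triple) : in_grid L c -> in_grid L d -> c != d ->
  is_corner c X -> is_corner d X -> mk_link K c d X \in Pat K ->
  forall ax, vfield (pt_cube K c) (pt_vec X) ax = vfield (pt_cube K d) (pt_vec X) ax.
Proof.
move=> c_grid d_grid cd cX dX cdP ax.
have [linkE uw _] := mk_link_valid c_grid d_grid cd cX dX.
have uw' : (pt_cube K c, pt_corner (sub_pt X c)) != (pt_cube K d, pt_corner (sub_pt X d)).
  by apply: contra uw => /eqP ->.
rewrite linkE in cdP; have := kernel_link xker cdP uw' ax.
rewrite -/(corner_vel _ _ ax) -/(corner_vel _ _ ax) !corner_vel_field.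
by rewrite (gridpt_pt_cube c_grid cX) (gridpt_pt_cube d_grid dX).
Qed.

Lemma cube_links_vfield (m : triple) : in_grid L m -> m != (0,0,0)%N ->
  (forall ax, vfield (pt_cube K m) (pt_vec (attach_pt L m)) ax
              = vfield (pt_cube K (parent m)) (pt_vec (attach_pt L m)) ax) /\
  (forall ax, vfield (pt_cube K m) (pt_vec (cycle_pt L m)) ax
              = vfield (pt_cube K (next_cube L m)) (pt_vec (cycle_pt L m)) ax).
Proof.
move=> m_grid m0.
have [[p_grid p_ne pc pc'] [n_grid n_ne nc nc']] := link_ends (L_ge2 K0) m_grid m0.
have mK : pt_cube K m \in nonorigin K by rewrite inE pt_cubeK.
rewrite eq_sym in p_ne; rewrite eq_sym in n_ne.
split; apply: link_vfield => //; rewrite /Pat in_setU; apply/orP.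
  by left; apply/imsetP; exists (pt_cube K m); rewrite // /attach_link pt_cubeK.
by right; apply/imsetP; exists (pt_cube K m); rewrite // /cycle_link pt_cubeK.
Qed.

Definition moves_with_origin (c : cubeL) : Prop :=
  forall X ax, vfield c X ax = vfield (origin K) X ax.

Lemma vfield_diff_shift c (O A : 'I_3 -> R) ax :
  vfield c (fun a => O a + A a) ax - vfield (origin K) (fun a => O a + A a) ax =
  (vfield c O ax - vfield (origin K) O ax)
  + cross (fun a => cube_rot (corner_vel c) a - cube_rot (corner_vel (origin K)) a) A ax.
Proof.
rewrite (vfield_shift c _ O) (vfield_shift (origin K) _ O) /cross.
by case: ifP => _; [|case: ifP => _]; rewrite /=; ring.
Qed.

Lemma pt_vec_frame d t u0 v0 (a : triple) ax :
  pt_vec (frame_pt d t u0 v0 a) ax = pt_vec (frame_pt d t u0 v0 (0,0,0)%N) ax + layer_vec R d a ax.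
Proof.
case: a => [[a b] c]; rewrite /pt_vec /layer_vec /frame_pt /unlayer /= !addn0.
by case: ifP => _; [|case: ifP => _]; case: (ord3_cases ax) => [->|[->|->]]; rewrite /= natrD.
Qed.

(* A piece all of whose parents move with the origin cube moves with it:
   its link equations are those of [piece_rigid]. *)
Section Piece.
Variables (d t u0 v0 : nat) (members : nat -> triple) (atts cycs : seq triple).
Local Notation n := (size atts).
Local Notation frame := (frame_pt d t u0 v0).
Hypothesis membersP : forall j, (j < n)%N ->
  [/\ in_grid L (members j), members j != (0,0,0)%N,
      moves_with_origin (pt_cube K (parent (members j))),
      attach_pt L (members j) = frame (nth (0,0,0)%N atts j) &
      next_cube L (members j) = members (cyc_next n j) /\
      cycle_pt L (members j) = frame (nth (0,0,0)%N cycs j)].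

(* Translation at the frame origin O and angular velocity of cube j, relative
   to the origin cube. *)
Let O := pt_vec (frame (0,0,0)%N).
Let F j ax := vfield (pt_cube K (members j)) O ax - vfield (origin K) O ax.
Let W j ax :=
  cube_rot (corner_vel (pt_cube K (members j))) ax - cube_rot (corner_vel (origin K)) ax.

Lemma vfield_frame c (a : triple) ax :
  vfield c (pt_vec (frame a)) ax - vfield (origin K) (pt_vec (frame a)) ax =
  (vfield c O ax - vfield (origin K) O ax)
  + cross (fun a => cube_rot (corner_vel c) a - cube_rot (corner_vel (origin K)) a)
          (layer_vec R d a) ax.
Proof.
rewrite -vfield_diff_shift.
by congr (_ - _); apply: vfield_ext => b; rewrite pt_vec_frame.
Qed.

Lemma piece_attach j : (j < n)%N -> forall ax,
  F j ax + cross (W j) (layer_vec R d (nth (0,0,0)%N atts j)) ax = 0.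
Proof.
move=> j_lt ax; have [m_grid m0 parent_moves attE _] := membersP j_lt.
have [attach _] := cube_links_vfield m_grid m0.
by rewrite /F /W -vfield_frame -attE attach parent_moves subrr.
Qed.

Lemma piece_cycle j : (j < n)%N -> forall ax,
  F j ax + cross (W j) (layer_vec R d (nth (0,0,0)%N cycs j)) ax =
  F (cyc_next n j) ax + cross (W (cyc_next n j)) (layer_vec R d (nth (0,0,0)%N cycs j)) ax.
Proof.
move=> j_lt ax; have [m_grid m0 _ _ [nextE cycE]] := membersP j_lt.
have [_ cycle] := cube_links_vfield m_grid m0.
by rewrite /F /W -!vfield_frame -cycE cycle nextE.
Qed.

Lemma piece_moves_with_origin : (d, atts, cycs) \in piece_kinds ->
  forall j, (j < n)%N -> moves_with_origin (pt_cube K (members j)).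
Proof.
move=> kind j j_lt X ax.
have Wj0 a : W j a = 0 by apply: (piece_rigid kind piece_attach piece_cycle).
have F0 : F j ax = 0 by have := piece_attach j_lt ax; rewrite cross0l // addr0.
rewrite (vfield_shift _ X O) (vfield_shift (origin K) X O); congr (_ + _).
  by apply/eqP; rewrite -subr_eq0; apply/eqP.
by apply: cross_ext => // a; apply/eqP; rewrite -subr_eq0; apply/eqP; exact: Wj0.
Qed.

End Piece.
End Kinematics.

Section Propagation.
Variables (R : realFieldType) (l : R) (K : nat).
Hypotheses (l0 : 0 < l) (K0 : (0 < K)%N).
Local Notation L := K.+1.
Local Notation cubeL := (cube L L L).
Variable x : 'rV[R]_#|{: coord L L L}|.
Hypothesis xker : x *m (rigidity_matrix l (Pat K))^T = 0.
Local Notation moves := (moves_with_origin x).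

Lemma phase_lt3_neq0 c : (phase c < 3)%N -> c != (0,0,0)%N.
Proof. by apply: contraTneq => ->. Qed.

Lemma layer_cube_moves d t u v : in_layer L d t u v ->
  (forall c : cubeL, (depth L (cube_pt c) < depth L (unlayer d t u v))%N -> moves c) ->
  moves (pt_cube K (unlayer d t u v)).
Proof.
move=> layer IH; have [d3 _ _ _] := layer; have L2 := L_ge2 K0.
have [idx_lt selfE _] := piece_cells L2 layer.
rewrite -selfE; apply: (piece_moves_with_origin l0 K0 xker (t := t)
  (u0 := piece_u0 L d u) (v0 := piece_v0 L d v) _ (layer_piece_kind L u v d3));
  rewrite size_shape_atts //.
move=> j j_lt; have := piece_members L2 layer j_lt.
case=> layer' depth_eq parentE attE next_cycleE.
have [ph' _] := layer_coords_unlayer layer'.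
have m_grid := in_layer_grid L2 layer'.
split => //.
- by apply: phase_lt3_neq0; rewrite ph'.
- have p_grid : in_grid L (parent (member L d t u v j)).
    by move: (in_grid_parent L2 layer'); rewrite /parent_l -parentE.
  apply: IH; rewrite pt_cubeK // -depth_eq parentE; exact: depth_parent layer'.
Qed.

Lemma base_cube_moves c : in_grid L c -> phase c = 3%N -> c != (0,0,0)%N ->
  moves (pt_cube K c).
Proof.
move=> c_grid ph c0.
have kind : (0%N, base_atts, base_cycs) \in piece_kinds.
  by rewrite /piece_kinds mem_cat mem_seq1 eqxx orbT.
suff base j : (j < 3)%N -> moves (pt_cube K (nth (0,0,0)%N base_cells j)).
  by case: (phase3_cases c_grid ph c0) => [->|[->|->]];
    [exact: (base 0%N) | exact: (base 1%N) | exact: (base 2%N)].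
apply: (piece_moves_with_origin l0 K0 xker (d := 0) (t := 0) (u0 := 0) (v0 := 0)
  (members := fun j => nth (0,0,0)%N base_cells j) _ kind).
have L2 := L_ge2 K0.
case=> [|[|[|//]]] _; repeat split => //;
  try (rewrite /in_grid /=; lia); by move=> X ax.
Qed.

Lemma cube_moves_step (c : cubeL) :
  (forall c' : cubeL, (depth L (cube_pt c') < depth L (cube_pt c))%N -> moves c') -> moves c.
Proof.
move=> IH; rewrite -(cube_ptK c); have c_grid := cube_pt_grid c.
have [c0|c0] := eqVneq (cube_pt c) (0,0,0)%N; first by rewrite c0 => X ax.
case: (phase_lt3 (cube_pt c)) => ph; last exact: base_cube_moves.
have := unlayer_layer_coords c_grid ph; case: (layer_coords _) => [[t u] v] [layer cE].
by rewrite cE; apply: layer_cube_moves layer _; rewrite -cE.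
Qed.

Lemma all_move_with_origin (c : cubeL) : moves c.
Proof.
move: {2}(depth L (cube_pt c)).+1 (ltnSn (depth L (cube_pt c))) => n.
elim: n c => [//|n IHn] c c_lt; apply: cube_moves_step => c' c'_lt.
by apply: IHn; lia.
Qed.

End Propagation.

(** * The rigid motions of the whole assembly *)

Section RigidMotions.
Variables (R : realFieldType) (L M N : nat).
Local Notation Nc := #|{: coord L M N}|.

(* Generators of the infinitesimal rigid motions: the three translations
   (i < 3) and the three rotations about the coordinate axes (i >= 3). *)
Definition rigid_motion (i : 'I_6) (k : coord L M N) : R :=
  let: (v, ax) := k in
  if (val i < 3)%N then (val i == val ax)%:R
  else cross (fun a => ((val i - 3)%N == val a)%:R) (pt_vec R (gridpt v)) ax.

Definition rigid_mx : 'M[R]_(6, Nc) := \matrix_(i < 6, j < Nc) rigid_motion i (enum_val j).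

Lemma velo_rigid_mx i v ax : velo (row i rigid_mx) v ax = rigid_motion i (v, ax).
Proof. by rewrite /velo !mxE enum_rankK. Qed.

(* A rotation preserves all distances to first order. *)
Lemma cross_orth (e P Q : 'I_3 -> R) :
  \sum_(ax < 3) (P ax - Q ax) * (cross e P ax - cross e Q ax) = 0.
Proof. by rewrite sum3 /cross /=; ring. Qed.

Lemma all_rows_cases (l : R) (P : link_pattern L M N) r :
  valid_pattern P -> r \in all_rows l P ->
  (exists c p q, cube_pair (p, q) /\ r = dist_row l (c, p) (c, q)) \/
  (exists a b ax, [/\ a != b, gridpt a = gridpt b & r = link_row R a b ax]).
Proof.
move=> Pvalid; rewrite mem_cat => /orP [].
  case/allpairsP => -[c [p q]] /= [_]; rewrite mem_filter => /andP [pq _] ->.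
  by left; exists c, p, q.
case/flatten_mapP => e; rewrite mem_enum => eP.
have [u [w [eE [uw gE]]]] := Pvalid e eP.
have uw' : u != w by apply: contra uw => /eqP ->.
have [[a b] abE ->] := link_rowsE R eE uw'.
case/mapP => ax _ ->; right; exists a, b, ax.
by case: abE => -[-> ->]; split; rewrite // eq_sym.
Qed.

Lemma rigid_mx_ker (l : R) (P : link_pattern L M N) : valid_pattern P ->
  rigid_mx *m (rigidity_matrix l P)^T = 0.
Proof.
move=> Pvalid; apply/matrixP => i k; rewrite !mxE.
have rP : nth 0 (all_rows l P) k \in all_rows l P by rewrite mem_nth.
set r := nth 0 (all_rows l P) k in rP *.
have -> : \sum_j rigid_mx i j * (rigidity_matrix l P)^T j k = \sum_j (row i rigid_mx) 0 j * r 0 j.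
  by apply: eq_bigr => j _; rewrite !mxE.
clearbody r; case: (all_rows_cases Pvalid rP) => [[c [p [q [pq ->]]]]|[a [b [ax [ab gE ->]]]]].
  have cpq : (c, p) != (c, q) by rewrite xpair_eqE eqxx cube_pair_neq.
  rewrite dot_dist_row //; under eq_bigr => ax _ do rewrite !velo_rigid_mx /=.
  have [i3|i3] := boolP (val i < 3)%N.
    by apply: big1 => ax _; rewrite subrr mulr0.
  set e := (fun a : 'I_3 => (((val i - 3)%N == val a)%:R : R)).
  transitivity ((2 * l) * \sum_(ax < 3) (pt_vec R (gridpt (c, p)) ax - pt_vec R (gridpt (c, q)) ax)
    * (cross e (pt_vec R (gridpt (c, p))) ax - cross e (pt_vec R (gridpt (c, q))) ax)).
    by rewrite mulr_sumr; apply: eq_bigr => ax _; rewrite /pos /pt_vec; ring.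
  by rewrite cross_orth mulr0.
by rewrite dot_link_row // !velo_rigid_mx /= gE subrr.
Qed.

End RigidMotions.

Lemma sum6 (R : realFieldType) (F : 'I_6 -> R) :
  \sum_(i < 6) F i = F (@Ordinal 6 0 isT) + F (@Ordinal 6 1 isT) + F (@Ordinal 6 2 isT)
    + F (@Ordinal 6 3 isT) + F (@Ordinal 6 4 isT) + F (@Ordinal 6 5 isT).
Proof.
rewrite !big_ord_recr big_ord0 /= add0r.
by congr (_ + _ + _ + _ + _ + _); apply: congr1; apply: val_inj.
Qed.

(* The six rigid motions are independent (look at one cube). *)
Lemma rigid_mx_free (R : realFieldType) (L M N : nat) :
  row_free (rigid_mx R L.+1 M.+1 N.+1).
Proof.
apply: inj_row_free => w wG.
pose c0 : cube L.+1 M.+1 N.+1 := (ord0, ord0, ord0).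
have E (p : corner) ax : (w *m rigid_mx R L.+1 M.+1 N.+1) 0 (enum_rank ((c0, p), ax)) = 0.
  by rewrite wG mxE.
move: (E (b0,b0,b0) ax0) (E (b0,b0,b0) ax1) (E (b0,b0,b0) ax2)
      (E (b1,b0,b0) ax1) (E (b1,b0,b0) ax2) (E (b0,b1,b0) ax2).
rewrite !mxE !sum6 !mxE !enum_rankK /rigid_motion /cross /pt_vec /gridpt /=.
rewrite ?add0n => e1 e2 e3 e4 e5 e6.
apply/rowP => i; rewrite mxE.
case: i => [[|[|[|[|[|[|//]]]]]] i6];
  match goal with |- context [@Ordinal 6 ?k ?h] =>
    rewrite (_ : @Ordinal 6 k h = @Ordinal 6 k isT); [lra | exact: val_inj] end.
Qed.


(** * The pattern rigidifies the assembly *)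

Section Rigidity.
Variables (R : realFieldType) (l : R) (K : nat).
Hypotheses (l0 : 0 < l) (K0 : (0 < K)%N).
Local Notation L := K.+1.

Lemma Pat_kernel (x : 'rV[R]_#|{: coord L L L}|) :
  x *m (rigidity_matrix l (Pat K))^T = 0 -> (x <= rigid_mx R L L L)%MS.
Proof.
move=> xker; pose tr := cube_trans (corner_vel x (origin K)).
pose rot := cube_rot (corner_vel x (origin K)).
pose a : 'rV[R]_6 := \row_i (nth 0 [:: tr ax0; tr ax1; tr ax2; rot ax0; rot ax1; rot ax2] i).
suff -> : x = a *m rigid_mx R L L L by exact: submxMl.
apply/rowP => j; rewrite !mxE sum6 !mxE /=.
have -> : x 0 j = velo x (enum_val j).1 (enum_val j).2.
  by rewrite /velo -surjective_pairing enum_valK.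
case: (enum_val j) => [[c p] ax] /=.
rewrite -/(corner_vel x c p ax) (corner_vel_field l0 xker) (all_move_with_origin l0 K0 xker).
rewrite /vfield /tr /rot /rigid_motion /pt_vec cube_pt_origin /=.
by case: (ord3_cases ax) => [->|[->|->]]; rewrite /cross /=; ring.
Qed.

Lemma dof_Pat : dof l (Pat K) = 6%N.
Proof.
rewrite /dof (rank_of_kernel (G := rigid_mx R L L L)) ?card_coord.
- have : (0 < L * L * L)%N by rewrite !muln_gt0.
  by lia.
- exact: Pat_kernel.
- exact: rigid_mx_ker (Pat_valid K0).
- exact: rigid_mx_free.
Qed.

End Rigidity.

Theorem theorem1 (R : realFieldType) (l : R) (hl : 0 < l) (L : nat) (hL : (2 <= L)%N) :
  is_delta3D l L L L (2 * L ^ 3 - 2)%N.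
Proof.
case: L hL => [|[|K]] // _; have K0 : (0 < K.+1)%N by [].
have cubeE : (K.+2 ^ 3 = K.+2 * K.+2 * K.+2)%N by rewrite !expnS expn0 muln1 mulnA.
split => [|P _]; last by rewrite cubeE; exact: rigidifies_card.
exists (Pat K.+1); split; first exact: Pat_valid.
have dof6 := dof_Pat hl K0; split => //.
have := card_Pat K.+1; have := rigidifies_card dof6.
have : (0 < K.+2 * K.+2 * K.+2)%N by rewrite !muln_gt0.
by rewrite cubeE; lia.
Qed.
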